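(* Let $\mathcal A_+,\mathcal A_-\subseteq\mathbb Z^n$ be disjoint finite sets, $\mathcal A=\mathcal A_+\cup\mathcal A_-$, with $\mathcal A_-\neq\varnothing$ and $\mathcal A_-\subseteq\operatorname{relint}(\operatorname{conv}(\mathcal A_+))$. Let $f\in\mathcal S(\mathcal A_+,\mathcal A_-)$ have nonsigned coefficients $c\in\mathbb R^{\mathcal A}_{>0}$, let $F$ be the critical system of $(\mathcal A_+,\mathcal A_-)$ and $h:\mathcal A\to\mathbb Z$ a height function lifting $\mathcal A_-$. Let $S:=\{t\in\mathbb R_{>0}: F(c\star t^h,x)=0\text{ for some }x\in\mathbb R^n_{>0}\}$. Then (i) $S$ has a minimum $t_*$, and (ii) $f$ is copositive if and only if $t_*\ge1$.
   Context: For disjoint finite $\mathcal A_+,\mathcal A_-\subseteq\mathbb R^n$, a signomial with signed support $(\mathcal A_+,\mathcal A_-)$ is a function $f:\mathbb R^n_{>0}\to\mathbb R$, $f(x)=\sum_{a\in\mathcal A_+}c_ax^a-\sum_{b\in\mathcal A_-}c_bx^b$ with all $c_a,c_b>0$ (the nonsigned coefficients). $\mathcal S(\mathcal A_+,\mathcal A_-)$ is the set of such signomials, identified with $\mathbb R^{\mathcal A}_{>0}$; $f_c$ denotes the signomial with nonsigned coefficients $c$. $f$ is copositive if $f\ge0$ on $\mathbb R^n_{>0}$. The critical system of $(\mathcal A_+,\mathcal A_-)$ is $F(c,x)=(f_c(x),x_1\partial_{x_1}f_c(x),\dots,x_n\partial_{x_n}f_c(x))$. A height function $h:\mathcal A\to\mathbb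 Z$ lifts $\mathcal A_-$ if $h(a)>0$ for $a\in\mathcal A_-$ and $h(a)=0$ for $a\in\mathcal A_+$; $c\star t^h=(c_at^{h(a)})_{a\in\mathcal A}$. *)

From HB Require Import structures.
From mathcomp Require Import all_boot all_order all_algebra.
From mathcomp Require Import all_classical all_reals all_analysis.
Set Implicit Arguments. Unset Strict Implicit. Unset Printing Implicit Defensive.
Import Order.TTheory GRing.Theory Num.Theory.
Import numFieldNormedType.Exports.
Local Open Scope classical_set_scope.
Local Open Scope ring_scope.

(* Exponent vectors live in Z^n, represented as 'rV[int]_n.
   Signed supports are finite duplicate-free lists Ap (= A_+), Am (= A_-). *)

Section Signomials.
Variables (R : realType) (n : nat).

Definition realvec (a : 'rV[int]_n) : 'rV[R]_n := map_mx (fun z : int => z%:~R) a.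

Definition monom (a : 'rV[int]_n) (x : 'rV[R]_n) : R :=
  \prod_(i < n) (x ord0 i) ^ (a ord0 i).

Definition signomial (Ap Am : seq 'rV[int]_n) (c : 'rV[int]_n -> R)
    (x : 'rV[R]_n) : R :=
  \sum_(a <- Ap) c a * monom a x - \sum_(b <- Am) c b * monom b x.

Definition positive_point (x : 'rV[R]_n) : Prop := forall i, 0 < x ord0 i.

Definition pos_coeffs (Ap Am : seq 'rV[int]_n) (c : 'rV[int]_n -> R) : Prop :=
  forall a, a \in Ap ++ Am -> 0 < c a.

Definition copositive (Ap Am : seq 'rV[int]_n) (c : 'rV[int]_n -> R) : Prop :=
  forall x, positive_point x -> 0 <= signomial Ap Am c x.

(* the critical system F(c,x) = (f_c(x), x_1 d_1 f_c(x), ..., x_n d_n f_c(x))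
   vanishes at (c,x) *)
Definition critical_zero (Ap Am : seq 'rV[int]_n) (c : 'rV[int]_n -> R)
    (x : 'rV[R]_n) : Prop :=
  signomial Ap Am c x = 0 /\
  forall i : 'I_n,
    x ord0 i * ('D_(delta_mx ord0 i) (signomial Ap Am c)) x = 0.

Definition lifts (Ap Am : seq 'rV[int]_n) (h : 'rV[int]_n -> int) : Prop :=
  (forall a, a \in Am -> 0 < h a) /\ (forall a, a \in Ap -> h a = 0).

Definition star_pow (c : 'rV[int]_n -> R) (t : R) (h : 'rV[int]_n -> int) :
  'rV[int]_n -> R := fun a => c a * t ^ (h a).

Definition conv_hull (A : seq 'rV[int]_n) : set 'rV[R]_n :=
  [set p | exists lam : 'rV[int]_n -> R,
     (forall a, a \in A -> 0 <= lam a) /\ \sum_(a <- A) lam a = 1 /\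
     p = \sum_(a <- A) lam a *: realvec a].

Definition aff_hull (A : seq 'rV[int]_n) : set 'rV[R]_n :=
  [set p | exists lam : 'rV[int]_n -> R,
     \sum_(a <- A) lam a = 1 /\ p = \sum_(a <- A) lam a *: realvec a].

Definition relint_conv (A : seq 'rV[int]_n) : set 'rV[R]_n :=
  [set p | conv_hull A p /\ exists2 eps : R, 0 < eps &
     forall y, aff_hull A y -> `|y - p| < eps -> conv_hull A y].

End Signomials.

(* In logarithmic coordinates x = exp y the signomial f_{c t^h} becomes
   fpos y - fneg t y, a difference of positive sums of exponentials in which only
   fneg depends on t, and strictly increasingly so.  Let tstar be the supremum of
   the t for which fpos >= fneg t everywhere.  Removing from y its component
   orthogonal to the differences of the points of A_+ rescales both sums by a
   common factor; after that, since A_- lies in the relative interior of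
   conv A_+, some exponent of A_+ beats every exponent of A_- by a margin
   proportional to |y|.  Hence domination holds for small t, fails for large t,
   and for t near tstar can only be tight inside a compact box.  So
   fpos >= fneg tstar with equality at some point, which is a global minimum of
   value 0 of f_{c tstar^h}, i.e. a zero of the critical system, while for
   t < tstar the signomial is positive.  Finally f = f_{c 1^h} is copositive iff
   domination holds at t = 1, i.e. iff 1 <= tstar. *)

From HB Require Import structures.
From mathcomp Require Import all_boot all_order all_algebra.
From mathcomp Require Import all_classical all_reals all_analysis.
From mathcomp Require Import lra ring zify.
Import Order.TTheory GRing.Theory Num.Theory.
Import numFieldNormedType.Exports.
Local Open Scope classical_set_scope.
Local Open Scope ring_scope.
Set Implicit Arguments. Unset Strict Implicit. Unset Printing Implicit Defensive.

Section SeqBig.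
Variables (R : realDomainType) (T : eqType).
Implicit Types (s : seq T) (F : T -> R).

Lemma sumr_seq_gt0 s F :
  s != [::] -> (forall i, i \in s -> 0 < F i) -> 0 < \sum_(i <- s) F i.
Proof.
case: s => // a s _ HF; rewrite big_cons ltr_pwDl ?HF ?mem_head //.
by rewrite big_seq sumr_ge0 // => i iS; rewrite ltW // HF // inE iS orbT.
Qed.

Lemma ler_sum_seq_term s F a :
  a \in s -> (forall i, i \in s -> 0 <= F i) -> F a <= \sum_(i <- s) F i.
Proof.
elim: s => // b s IH; rewrite inE big_cons => /orP[/eqP-> | aS] HF.
  by rewrite lerDl big_seq sumr_ge0 // => i iS; rewrite HF // inE iS orbT.
rewrite (le_trans (IH aS _)) ?lerDr ?HF ?mem_head // => i iS.
by rewrite HF // inE iS orbT.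
Qed.

Lemma seq_argmax s F : s != [::] ->
  exists2 a, a \in s & forall x, x \in s -> F x <= F a.
Proof.
elim: s => // a s IH _; have [-> | /IH [a' a's Ha']] := eqVneq s [::].
  by exists a => [|x]; rewrite ?mem_head // inE => /eqP->.
have [le | lt] := leP (F a) (F a').
  exists a' => [|x]; first by rewrite inE a's orbT.
  by rewrite inE => /orP[/eqP-> // | /Ha'].
exists a => [|x]; first exact: mem_head.
by rewrite inE => /orP[/eqP-> // | /Ha' /le_trans]; apply; apply: ltW.
Qed.

End SeqBig.

Lemma exprD1_le_lin (R : realFieldType) (d : R) (k : nat) :
  0 <= d -> d <= 1 -> (1 + d) ^+ k <= 1 + d * (2 ^+ k - 1).
Proof.
move=> d0 d1; elim: k => [|k IH]; first by rewrite !expr0 subrr mulr0 addr0.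
have hK : 1 <= 2 ^+ k :> R by apply: exprn_ege1; lra.
rewrite !exprS; set X := (1 + d) ^+ k in IH *; set K := 2 ^+ k in hK *.
have : (1 + d) * X <= (1 + d) * (1 + d * (K - 1)) by apply: ler_wpM2l => //; lra.
have : d * (K - 1) * d <= d * (K - 1) by rewrite ler_piMr ?mulr_ge0 //; lra.
nra.
Qed.

Lemma continuous_big_sum (R : numFieldType) (T : topologicalType) (I : Type)
    (r : seq I) (F : I -> T -> R) :
  (forall i, continuous (F i)) -> continuous (fun x => \sum_(i <- r) F i x).
Proof.
move=> cF; elim: r => [|a r IH].
  by under eq_fun do rewrite big_nil; exact: cst_continuous.
by under eq_fun do rewrite big_cons; move=> x; apply: continuousD; [exact: cF | exact: IH].
Qed.

(* [w w^T = 0] forces [w = 0], so [ker (D D^T) = ker D]: hence [D^T] and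
   [D D^T] have the same rank and [D^T <= D D^T]. *)
Lemma exists_proj_rowspace (R : realFieldType) (m n : nat)
    (D : 'M[R]_(m, n)) (y : 'rV[R]_n) :
  exists u : 'rV[R]_m, (y - u *m D) *m D^T = 0.
Proof.
pose G := D *m D^T.
have kerG (v : 'rV[R]_m) : v *m G = 0 -> v *m D = 0.
  move=> vG; set w := v *m D.
  have : (w *m w^T) 0 0 = 0.
    by rewrite /w trmx_mul mulmxA -(mulmxA v) -/G vG mul0mx mxE.
  rewrite mxE => /eqP; rewrite psumr_eq0 => [/allP Hw|k _]; last first.
    by rewrite !mxE -expr2 sqr_ge0.
  apply/rowP => k; have /implyP := Hw k (mem_index_enum _).
  by rewrite !mxE mulf_eq0 orbb => /(_ isT) /eqP.
have sK : (kermx G <= kermx D)%MS.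
  apply/row_subP => i; apply/sub_kermxP; apply: kerG.
  by rewrite -row_mul mulmx_ker row0.
have rk : (\rank D <= \rank G)%N.
  have := mxrankS sK; rewrite !mxrank_ker.
  have := rank_leq_row G; have := rank_leq_row D; lia.
have DtG : (D^T <= G)%MS.
  rewrite -(mxrank_leqif_sup (submxMl D D^T)).2 eqn_leq mxrank_tr rk andbT.
  by have := mxrankS (submxMl D D^T); rewrite mxrank_tr.
have /submxP [u yu] := submx_trans (submxMl y D^T) DtG.
by exists u; rewrite mulmxBl yu /G mulmxA subrr.
Qed.

Section DotProduct.
Variables (R : realFieldType) (n : nat).
Implicit Types (y z p q : 'rV[R]_n).

Definition dotr p y : R := \sum_(k < n) p 0 k * y 0 k.

Lemma dotrC p y : dotr p y = dotr y p.
Proof. by apply: eq_bigr => k _; rewrite mulrC. Qed.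

Lemma dotrDl p q y : dotr (p + q) y = dotr p y + dotr q y.
Proof. by rewrite /dotr -big_split; apply: eq_bigr => k _; rewrite mxE mulrDl. Qed.

Lemma dotrBl p q y : dotr (p - q) y = dotr p y - dotr q y.
Proof. by rewrite /dotr -sumrB; apply: eq_bigr => k _; rewrite !mxE mulrBl. Qed.

Lemma dotrZl s p y : dotr (s *: p) y = s * dotr p y.
Proof. by rewrite /dotr mulr_sumr; apply: eq_bigr => k _; rewrite mxE mulrA. Qed.

Lemma dotrDr p y z : dotr p (y + z) = dotr p y + dotr p z.
Proof. by rewrite !(dotrC p) dotrDl. Qed.

Lemma dotr0r p : dotr p 0 = 0.
Proof. by rewrite /dotr big1 // => k _; rewrite mxE mulr0. Qed.

Lemma dotr_suml (I : Type) (r : seq I) (F : I -> 'rV[R]_n) y :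
  dotr (\sum_(i <- r) F i) y = \sum_(i <- r) dotr (F i) y.
Proof.
elim: r => [|a r IH]; last by rewrite !big_cons dotrDl IH.
by rewrite !big_nil dotrC dotr0r.
Qed.

Lemma normr_sqr_le_dotr p : `|p| ^+ 2 <= dotr p p.
Proof.
have -> : `|p| = mx_norm p by [].
have [-> | /mx_norm_neq0 [[i j] /= pij]] := eqVneq (mx_norm p) 0.
  by rewrite expr0n sumr_ge0 // => k _; rewrite -expr2 sqr_ge0.
rewrite pij real_normK ?num_real // (ord1 i) /dotr (bigD1 j) //= -expr2.
by rewrite lerDl sumr_ge0 // => k _; rewrite -expr2 sqr_ge0.
Qed.

Lemma normr_coord_le y i : `|y 0 i| <= `|y|.
Proof.
have -> : `|y| = mx_norm y by [].
by rewrite mx_normrE; apply/bigmax_geP; right; exists (0, i).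
Qed.

Lemma continuous_dotr p : continuous (dotr p).
Proof.
apply: continuous_big_sum => k y.
by apply: continuousM; [exact: cst_continuous | exact: coord_continuous].
Qed.

End DotProduct.

Section LogCoordinates.
Variables (R : realType) (n : nat).
Implicit Types (x y : 'rV[R]_n).

Definition expv y : 'rV[R]_n := \row_k expR (y 0 k).
Definition lnv x : 'rV[R]_n := \row_k ln (x 0 k).

Lemma monom_expv a y : monom a (expv y) = expR (dotr (realvec R a) y).
Proof.
rewrite /monom /dotr expR_sum; apply: eq_bigr => k _; rewrite !mxE.
by rewrite mulrC expRM powR_intmul // expR_ge0.
Qed.

Lemma lnvK x : positive_point x -> expv (lnv x) = x.
Proof. by move=> px; apply/rowP => k; rewrite !mxE lnK // posrE. Qed.

Lemma positive_point_expv y : positive_point (expv y).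
Proof. by move=> k; rewrite mxE expR_gt0. Qed.

Lemma continuous_expsum (I : Type) (r : seq I) (w : I -> R) (p : I -> 'rV[R]_n) :
  continuous (fun y => \sum_(i <- r) w i * expR (dotr (p i) y)).
Proof.
apply: continuous_big_sum => i y.
apply: (@continuousM _ _ (fun=> w i) (fun y => expR (dotr (p i) y))).
  exact: cst_continuous.
by apply: continuous_comp; [exact: continuous_dotr | exact: continuous_expR].
Qed.

End LogCoordinates.

Section CriticalPoints.
Variable R : realType.

Lemma derivable_big_sum (V W : normedModType R) (I : Type) (r : seq I)
    (F : I -> V -> W) x v :
  (forall i, derivable (F i) x v) -> derivable (fun y => \sum_(i <- r) F i y) x v.
Proof.
move=> dF; elim: r => [|a r IH]; first by under eq_fun do rewrite big_nil; exact: derivable_cst.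
by under eq_fun do rewrite big_cons; exact: derivableD.
Qed.

Lemma derivable_big_prod (V : normedModType R) (I : Type) (r : seq I)
    (F : I -> V -> R) x v :
  (forall i, derivable (F i) x v) -> derivable (fun y => \prod_(i <- r) F i y) x v.
Proof.
move=> dF; elim: r => [|a r IH]; first by under eq_fun do rewrite big_nil; exact: derivable_cst.
by under eq_fun do rewrite big_cons; exact: derivableM.
Qed.

Lemma derivable_affine_exprz (al be t : R) (z : int) : t * al + be != 0 ->
  derivable (fun s : R => (s * al + be) ^ z) t 1.
Proof.
have daff : derivable (fun s : R => s * al + be) t 1.
  by apply: derivableD => //; apply: derivableM.
move=> nz; case: z => m; first by have := @derivableX _ _ _ m _ _ daff; rewrite exprfctE.
have := @derivableX _ _ _ m.+1 _ _ daff; rewrite exprfctE => d.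
by apply: derivableV d; rewrite expf_neq0.
Qed.

Lemma derivable_signomial_line (n : nat) (Ap Am : seq 'rV[int]_n)
    (c : 'rV[int]_n -> R) (x v : 'rV[R]_n) (t : R) :
  positive_point (t *: v + x) ->
  derivable (fun s : R => signomial Ap Am c (s *: v + x)) t 1.
Proof.
move=> pp; have dmonom a : derivable (fun s : R => c a * monom a (s *: v + x)) t 1.
  apply: derivableM => //; apply: derivable_big_prod => k.
  under eq_fun do rewrite !mxE.
  by apply: derivable_affine_exprz; have := pp k; rewrite !mxE => /gt_eqF ->.
by apply: derivableB; apply: derivable_big_sum.
Qed.

(* A minimum over the open orthant is a minimum along each coordinate line. *)
Lemma derive_signomial_min (n : nat) (Ap Am : seq 'rV[int]_n)
    (c : 'rV[int]_n -> R) (x : 'rV[R]_n) (i : 'I_n) : positive_point x ->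
  (forall z, positive_point z -> signomial Ap Am c x <= signomial Ap Am c z) ->
  'D_(delta_mx 0 i) (signomial Ap Am c) x = 0.
Proof.
move=> px fmin; set v := delta_mx 0 i; set f := signomial Ap Am c.
pose g (s : R) := f (s *: v + x).
have -> : 'D_v f x = 'D_1 g 0.
  rewrite /derive; suff -> : (fun s : R => s^-1 *: ((f \o shift x) (s *: v) - f x)) =
      (fun s : R => s^-1 *: ((g \o shift 0) (s *: 1) - g 0)) by [].
  by apply/funext => s /=; rewrite /g scale0r add0r addr0 [s%:A]mulr1.
have line_pos s : - x 0 i < s -> positive_point (s *: v + x).
  move=> xs k; rewrite /v !mxE; have [->|ik] := eqVneq k i.
    by rewrite ?eqxx ?mulr1 /=; lra.
  by rewrite ?(negbTE ik) /= ?mulr0 ?add0r.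
have xi := px i.
have [] // : is_derive (0 : R) (1 : R) g 0.
apply: (@derive1_at_min R g (- x 0 i) (x 0 i)); first lra.
- move=> s; rewrite in_itv /= => /andP[s1 _].
  exact/derivable_signomial_line/line_pos.
- by rewrite in_itv /=; apply/andP; split; lra.
- move=> s; rewrite in_itv /= => /andP[s1 _].
  by rewrite /g scale0r add0r; apply/fmin/line_pos.
Qed.

End CriticalPoints.

Section Threshold.
Variables (R : realType) (n : nat) (Ap Am : seq 'rV[int]_n)
  (c : 'rV[int]_n -> R) (h : 'rV[int]_n -> int).
Hypotheses (Ap_uniq : uniq Ap) (Am_neq0 : Am != [::])
  (Am_relint : forall b, b \in Am -> relint_conv Ap (realvec R b))
  (c_pos : pos_coeffs Ap Am c) (h_lifts : lifts Ap Am h).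

Local Notation rv a := (realvec R a).
Implicit Types (x y z p : 'rV[R]_n) (t : R).

Definition fpos y := \sum_(a <- Ap) c a * expR (dotr (rv a) y).
Definition fneg t y := \sum_(b <- Am) c b * t ^ h b * expR (dotr (rv b) y).

Lemma signomial_expv t y :
  signomial Ap Am (star_pow c t h) (expv y) = fpos y - fneg t y.
Proof.
rewrite /signomial /fpos /fneg; congr (_ - _); apply: eq_big_seq => a aA.
  by rewrite /star_pow monom_expv h_lifts.2 // expr0z mulr1.
by rewrite /star_pow monom_expv.
Qed.

Lemma c_Ap_gt0 a : a \in Ap -> 0 < c a.
Proof. by move=> aA; apply: c_pos; rewrite mem_cat aA. Qed.

Lemma c_Am_gt0 b : b \in Am -> 0 < c b.
Proof. by move=> bA; apply: c_pos; rewrite mem_cat bA orbT. Qed.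

Lemma Ap_neq0 : Ap != [::].
Proof.
case: Am Am_neq0 Am_relint => // b s _ /(_ b (mem_head _ _)) [[lam [_ [+ _]]] _].
by case: Ap => //; rewrite big_nil => /esym/eqP; rewrite oner_eq0.
Qed.

Definition hdeg b := `|h b|%N.
Definition hmax := (\max_(b <- Am) hdeg b)%N.

Lemma exprz_hdeg b t : b \in Am -> t ^ h b = t ^+ hdeg b.
Proof. by move=> bA; rewrite /hdeg -[in LHS](gtz0_abs (h_lifts.1 b bA)). Qed.

Lemma hdeg_gt0 b : b \in Am -> (0 < hdeg b)%N.
Proof. by move=> bA; rewrite /hdeg absz_gt0 gt_eqF // h_lifts.1. Qed.

Lemma fpos_gt0 y : 0 < fpos y.
Proof. by apply: sumr_seq_gt0 Ap_neq0 _ => a aA; rewrite mulr_gt0 ?c_Ap_gt0 ?expR_gt0. Qed.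

Lemma fneg_term_gt0 t y b : 0 < t -> b \in Am ->
  0 < c b * t ^ h b * expR (dotr (rv b) y).
Proof. by move=> t0 bA; rewrite exprz_hdeg // !mulr_gt0 ?c_Am_gt0 ?exprn_gt0 ?expR_gt0. Qed.

Lemma fneg_gt0 t y : 0 < t -> 0 < fneg t y.
Proof. by move=> t0; apply: sumr_seq_gt0 Am_neq0 _ => b; apply: fneg_term_gt0. Qed.

Lemma fneg_lt t t' y : 0 < t -> t < t' -> fneg t y < fneg t' y.
Proof.
move=> t0 tt'; rewrite /fneg big_seq [X in _ < X]big_seq; apply: ltr_sum.
  by case: Am Am_neq0 => // b s _ /=; rewrite mem_head.
move=> b bA; rewrite !exprz_hdeg // ltr_pM2r ?expR_gt0 // ltr_pM2l ?c_Am_gt0 //.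
by rewrite ltrXn2r ?ltW // -lt0n hdeg_gt0.
Qed.

Lemma fneg_le t t' y : 0 < t -> t <= t' -> fneg t y <= fneg t' y.
Proof. by move=> t0; rewrite le_eqVlt => /predU1P[-> // | /(fneg_lt y t0) /ltW]. Qed.

Lemma fneg_scale_le t d y : 0 < t -> 0 <= d -> d <= 1 ->
  fneg ((1 + d) * t) y <= (1 + d * (2 ^+ hmax - 1)) * fneg t y.
Proof.
move=> t0 d0 d1.
apply: le_trans (ler_wpM2r (ltW (fneg_gt0 y t0)) (exprD1_le_lin hmax d0 d1)).
rewrite /fneg mulr_sumr big_seq [X in _ <= X]big_seq; apply: ler_sum => b bA.
have hb : (1 + d) ^+ hdeg b <= (1 + d) ^+ hmax.
  by rewrite ler_weXn2l ?leq_bigmax_seq //; lra.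
rewrite !exprz_hdeg // exprMn.
have := ltW (fneg_term_gt0 y t0 bA); rewrite exprz_hdeg // => Tb.
have -> : c b * ((1 + d) ^+ hdeg b * t ^+ hdeg b) * expR (dotr (rv b) y) =
  (1 + d) ^+ hdeg b * (c b * t ^+ hdeg b * expR (dotr (rv b) y)) by ring.
exact: ler_wpM2r.
Qed.

Lemma fneg0_le_lin t : 0 < t -> t <= 1 -> fneg t 0 <= t * fneg 1 0.
Proof.
move=> t0 t1; rewrite /fneg mulr_sumr big_seq [X in _ <= X]big_seq.
apply: ler_sum => b bA; rewrite !exprz_hdeg // expr1n mulr1.
have := hdeg_gt0 bA; case: (hdeg b) => // k _; rewrite exprS.
rewrite [X in X <= _](_ : _ = t * (c b * expR (dotr (rv b) 0)) * t ^+ k); last by ring.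
have cE : 0 <= t * (c b * expR (dotr (rv b) 0)).
  by rewrite ltW // !mulr_gt0 ?c_Am_gt0 ?expR_gt0.
by rewrite ler_piMr // exprn_ile1 // ltW.
Qed.

Definition a0 := nth 0 Ap 0.

Lemma a0_in : a0 \in Ap.
Proof. by apply: mem_nth; case: Ap Ap_neq0. Qed.

Definition diffmx : 'M[R]_(size Ap, n) :=
  \matrix_(j, k) (rv (nth 0 Ap j) - rv a0) 0 k.

Lemma row_diffmx j : row j diffmx = rv (nth 0 Ap j) - rv a0.
Proof. by apply/rowP => k; rewrite !mxE. Qed.

Lemma conv_hull_aff_hull p : conv_hull Ap p -> aff_hull Ap p.
Proof. by move=> [lam [_ [s1 e]]]; exists lam. Qed.

Lemma aff_hull_add_diff p a a' k : aff_hull Ap p -> a \in Ap -> a' \in Ap ->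
  aff_hull Ap (p + k *: (rv a - rv a')).
Proof.
move=> [lam [s1 ->]] aA a'A.
have pick (V : zmodType) b (F : 'rV[int]_n -> V) : b \in Ap ->
    \sum_(e <- Ap) (if e == b then F e else 0) = F b.
  by move=> bA; rewrite (bigD1_seq b) //= eqxx big1 ?addr0 // => e /negbTE ->.
exists (fun e => lam e + (if e == a then k else 0) - (if e == a' then k else 0)).
have ind b : \sum_(e <- Ap) (if e == b then k else 0) *: rv e =
    \sum_(e <- Ap) (if e == b then k *: rv e else 0).
  by apply: eq_bigr => e _; case: eqP => _; rewrite ?scale0r.
split; first by rewrite sumrB big_split /= s1 (pick _ _ (fun _ => k)) // (pick _ _ (fun _ => k)) // addrK.
apply/esym; under eq_bigr do rewrite scalerBl scalerDl.
by rewrite sumrB big_split /= ind ind !pick // scalerBr addrA.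
Qed.

Lemma aff_hull_add_rowspace p u : aff_hull Ap p -> aff_hull Ap (p + u *m diffmx).
Proof.
rewrite mulmx_sum_row => pA; elim/big_rec: _ => [|j q _ Hq]; first by rewrite addr0.
rewrite addrCA addrC row_diffmx.
by apply: aff_hull_add_diff Hq _ a0_in; apply: mem_nth.
Qed.

Lemma conv_hull_dotr_le p y M : conv_hull Ap p ->
  (forall a, a \in Ap -> dotr (rv a) y <= M) -> dotr p y <= M.
Proof.
move=> [lam [l0 [s1 ->]]] HM; rewrite dotr_suml -[M]mul1r -s1 mulr_suml.
rewrite big_seq [X in _ <= X]big_seq; apply: ler_sum => a aA.
by rewrite dotrZl ler_wpM2l ?l0 ?HM.
Qed.

(* The component of [y] orthogonal to the differences [rv a - rv a0] pairs to the
   same value with every point of [Ap], hence of its convex hull, hence of [Am]. *)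
Lemma exists_rowspace_shift y : exists u k, forall a, a \in Ap ++ Am ->
  dotr (rv a) y = dotr (rv a) (u *m diffmx) + k.
Proof.
have [u Hu] := exists_proj_rowspace diffmx y; set w := y - u *m diffmx in Hu.
have orth j : dotr (row j diffmx) w = 0.
  have : (w *m diffmx^T) 0 j = 0 by rewrite Hu mxE.
  by rewrite mxE => <-; apply: eq_bigr => k _; rewrite !mxE mulrC.
have onAp a : a \in Ap -> dotr (rv a) w = dotr (rv a0) w.
  move=> aA; have jlt : (index a Ap < size Ap)%N by rewrite index_mem.
  have /eqP := orth (Ordinal jlt); rewrite row_diffmx /= nth_index // dotrBl.
  by rewrite subr_eq0 => /eqP.
have onAm b : b \in Am -> dotr (rv b) w = dotr (rv a0) w.
  move=> /Am_relint [[lam [_ [s1 ->]]] _]; rewrite dotr_suml.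
  under eq_big_seq => a aA do rewrite dotrZl onAp //.
  by rewrite -mulr_suml s1 mul1r.
exists u, (dotr (rv a0) w) => a; rewrite mem_cat => Ha.
rewrite -{1}(subrK (u *m diffmx) y) -/w dotrDr addrC.
by case/orP: Ha => [/onAp | /onAm] ->.
Qed.

Lemma relint_uniform_radius : exists2 eps : R, 0 < eps & forall b, b \in Am ->
  forall z, aff_hull Ap z -> `|z - rv b| < eps -> conv_hull Ap z.
Proof.
have : {subset Am <= Am} by [].
elim: {-2}Am => [|b s IH] sub; first by exists 1.
have [e1 e1p He1] := IH (fun e es => sub e (@mem_behead _ (b :: s) _ es)).
have [_ [e2 e2p He2]] := Am_relint (sub b (mem_head _ _)).
exists (Num.min e1 e2) => [|x]; first by rewrite lt_min e1p e2p.
rewrite inE => /predU1P[-> | xs] z zA; rewrite lt_min => /andP[z1 z2].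
  exact: He2.
exact: He1 xs z zA z1.
Qed.

Definition margin e y := exists2 a, a \in Ap &
  forall b, b \in Am -> dotr (rv b) y + e * `|y| <= dotr (rv a) y.

(* Move from [rv b] a distance [eps / 2] along [y]: the point stays in the convex
   hull, so the best exponent of [Ap] beats [rv b] by [eps / 2 * |y|] in direction [y]. *)
Lemma exists_margin_rowspace : exists2 e, 0 < e & forall u, margin e (u *m diffmx).
Proof.
have [eps e0 He] := relint_uniform_radius.
exists (eps / 2) => [|u]; first by rewrite divr_gt0.
set y := u *m diffmx.
have [a aA Ha] := seq_argmax (fun a => dotr (rv a) y) Ap_neq0.
exists a => // b bA; have [-> | yn0] := eqVneq y 0.
  by rewrite normr0 mulr0 addr0 !dotr0r.
have ny : 0 < `|y| by rewrite normr_gt0.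
pose s := eps / 2 / `|y|.
have s0 : 0 < s by rewrite !divr_gt0.
have zconv : conv_hull Ap (rv b + s *: y).
  apply: (He b bA); last first.
    by rewrite addrC addKr normrZ gtr0_norm // divfK ?gt_eqF //; lra.
  by rewrite /y scalemxAl; apply/aff_hull_add_rowspace/conv_hull_aff_hull/(Am_relint bA).1.
have := conv_hull_dotr_le zconv Ha; rewrite dotrDl dotrZl.
have -> : eps / 2 * `|y| = s * `|y| ^+ 2 by rewrite /s expr2 mulrA divfK ?gt_eqF.
have := normr_sqr_le_dotr y; nra.
Qed.

Definition dominated t := forall y, fneg t y <= fpos y.

Lemma exists_margin_reduction : exists2 e, 0 < e & forall t,
  (forall y, margin e y -> fneg t y <= fpos y) -> dominated t.
Proof.
have [e e0 He] := exists_margin_rowspace; exists e => // t Ht y.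
have [u [k Hk]] := exists_rowspace_shift y.
have -> : fpos y = expR k * fpos (u *m diffmx).
  rewrite /fpos mulr_sumr; apply: eq_big_seq => a aA.
  by rewrite Hk ?mem_cat ?aA // expRD; ring.
have -> : fneg t y = expR k * fneg t (u *m diffmx).
  rewrite /fneg mulr_sumr; apply: eq_big_seq => b bA.
  by rewrite Hk ?mem_cat ?bA ?orbT // expRD; ring.
by rewrite ler_wpM2l ?expR_ge0 ?Ht.
Qed.

Lemma exists_cmin : exists2 m, 0 < m & forall a, a \in Ap -> m <= c a.
Proof.
have [a aA Ha] := seq_argmax (fun a => - c a) Ap_neq0.
by exists (c a) => [|a' /Ha]; rewrite ?c_Ap_gt0 // lerN2.
Qed.

Lemma fneg_lt_fpos_margin t y e m : 0 < t -> margin e y ->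
  (forall a, a \in Ap -> m <= c a) -> fneg t 0 * expR (- (e * `|y|)) < m ->
  fneg t y < fpos y.
Proof.
move=> t0 [a aA Ha] Hm lt_m.
have fneg_le_a : fneg t y <= fneg t 0 * expR (- (e * `|y|)) * expR (dotr (rv a) y).
  rewrite /fneg !mulr_suml big_seq [X in _ <= X]big_seq.
  apply: ler_sum => b bA; rewrite dotr0r expR0 mulr1 -!mulrA exprz_hdeg //.
  apply: ler_wpM2l; first exact/ltW/c_Am_gt0.
  apply: ler_wpM2l; first by rewrite exprn_ge0 // ltW.
  by rewrite -expRD ler_expR; have := Ha b bA; lra.
have fpos_ge_a : c a * expR (dotr (rv a) y) <= fpos y.
  apply: (ler_sum_seq_term (F := fun a => c a * expR (dotr (rv a) y))) => // a' a'A.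
  by rewrite mulr_ge0 ?expR_ge0 // ltW ?c_Ap_gt0.
rewrite (le_lt_trans fneg_le_a) // (lt_le_trans _ fpos_ge_a) // ltr_pM2r ?expR_gt0 //.
exact: lt_le_trans lt_m (Hm a aA).
Qed.

Lemma margin_small e : 0 < e ->
  exists2 t, 0 < t & forall y, margin e y -> fneg t y < fpos y.
Proof.
move=> e0; have [m m0 Hm] := exists_cmin.
have N1 : 0 < fneg 1 0 by exact: fneg_gt0.
pose t := Num.min 1 (m / (2 * fneg 1 0)).
have t0 : 0 < t by rewrite lt_min ltr01 /= divr_gt0 // mulr_gt0.
exists t => // y my; apply: (fneg_lt_fpos_margin t0 my Hm).
have : fneg t 0 <= t * fneg 1 0 by apply: fneg0_le_lin t0 _; rewrite ge_min lexx.
have : t * (2 * fneg 1 0) <= m.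
  by rewrite -ler_pdivlMr ?mulr_gt0 // ge_min lexx orbT.
have : expR (- (e * `|y|)) <= 1 by rewrite expR_le1 oppr_le0 mulr_ge0 // ltW.
have := fneg_gt0 0 t0; nra.
Qed.

Lemma margin_far e T : 0 < e -> 0 < T -> exists2 rho, 0 < rho &
  forall t y, 0 < t -> t <= T -> margin e y -> rho < `|y| -> fneg t y < fpos y.
Proof.
move=> e0 T0; have [m m0 Hm] := exists_cmin.
have NT := fneg_gt0 0 T0.
exists (fneg T 0 / (m * e)) => [|t y t0 tT my]; first by rewrite divr_gt0 // mulr_gt0.
rewrite ltr_pdivrMr ?mulr_gt0 // => rho_y.
apply: (fneg_lt_fpos_margin t0 my Hm).
rewrite expRN -[_ * _^-1]/(_ / _) ltr_pdivrMr ?expR_gt0 //.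
have : m * (1 + e * `|y|) <= m * expR (e * `|y|) by rewrite ler_wpM2l ?expR_ge1Dx ?ltW.
have := fneg_le 0 t0 tT; nra.
Qed.

Definition tstar := sup [set t | 0 < t /\ dominated t].

Lemma has_sup_dominated : has_sup [set t | 0 < t /\ dominated t].
Proof.
split.
  have [e e0 reduce] := exists_margin_reduction.
  have [t t0 Ht] := margin_small e0.
  by exists t; split => //; apply: reduce => y /Ht /ltW.
have [b bA] : exists b, b \in Am by case: Am Am_neq0 => // b s _; exists b; rewrite mem_head.
exists (Num.max 1 (fpos 0 / c b)) => t [t0 dt]; rewrite le_max.
have [//|t1] := leP t 1; rewrite ler_pdivlMr ?c_Am_gt0 // orbC (le_trans _ (dt 0)) //.
have : c b * t ^ h b * expR (dotr (rv b) 0) <= fneg t 0.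
  apply: (ler_sum_seq_term (F := fun b => c b * t ^ h b * expR (dotr (rv b) 0))) => //.
  by move=> b' b'A; exact/ltW/fneg_term_gt0.
rewrite dotr0r expR0 mulr1 exprz_hdeg //.
have : t <= t ^+ hdeg b by rewrite ler_eXnr ?hdeg_gt0 // ltW.
have := c_Am_gt0 bA; nra.
Qed.

Lemma le_tstar t : 0 < t -> dominated t -> t <= tstar.
Proof. by move=> t0 dt; apply: sup_upper_bound has_sup_dominated _ _. Qed.

Lemma tstar_gt0 : 0 < tstar.
Proof. by have [[t [t0 dt]] _] := has_sup_dominated; rewrite (lt_le_trans t0) ?le_tstar. Qed.

Lemma fneg_lt_fpos_below t y : 0 < t -> t < tstar -> fneg t y < fpos y.
Proof.
move=> t0; rewrite -subr_gt0 => lt.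
have [t' [t'0 dt'] lt'] := sup_adherent lt has_sup_dominated.
by rewrite (lt_le_trans _ (dt' y)) // fneg_lt //; move: lt'; rewrite opprB addrCA subrr addr0.
Qed.

(* [tstar / (1 + d)] is below the threshold, and [fneg_scale_le] gives
   [fneg tstar y <= (1 + O(d)) * fpos y] for every small [d]. *)
Lemma dominated_tstar : dominated tstar.
Proof.
move=> y; apply/ler_addgt0Pr => eps eps0.
have P0 := fpos_gt0 y; have ts0 := tstar_gt0.
have K1 : 1 <= 2 ^+ hmax :> R by rewrite exprn_ege1 // ler1n.
pose d := Num.min 1 (eps / (fpos y * 2 ^+ hmax)).
have d0 : 0 < d by rewrite lt_min ltr01 /= divr_gt0 // mulr_gt0 //; lra.
have d1 : d <= 1 by rewrite ge_min lexx.
have dP : d * (fpos y * 2 ^+ hmax) <= eps.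
  by rewrite -ler_pdivlMr ?mulr_gt0 ?ge_min ?lexx ?orbT //; lra.
pose t := tstar / (1 + d).
have t0 : 0 < t by rewrite divr_gt0 //; lra.
have tlt : t < tstar by rewrite ltr_pdivrMr; [nra | lra].
have := fneg_scale_le y t0 (ltW d0) d1.
have -> : (1 + d) * t = tstar by rewrite /t mulrC divfK // gt_eqF //; lra.
have : (1 + d * (2 ^+ hmax - 1)) * fneg t y <= (1 + d * (2 ^+ hmax - 1)) * fpos y.
  by rewrite ler_wpM2l ?(ltW (fneg_lt_fpos_below y t0 tlt)) //; nra.
nra.
Qed.

Lemma dominated_iff_le_tstar t : 0 < t -> dominated t <-> t <= tstar.
Proof.
move=> t0; split; first exact: le_tstar.
rewrite le_eqVlt => /predU1P[-> | lt]; first exact: dominated_tstar.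
by move=> y; exact/ltW/fneg_lt_fpos_below.
Qed.

Lemma exists_box_ratio_max t rho : 0 <= rho ->
  exists2 ys : 'rV[R]_n, (forall i, `|ys 0 i| <= rho) &
    forall y, (forall i, `|y 0 i| <= rho) -> fneg t y / fpos y <= fneg t ys / fpos ys.
Proof.
move=> rho0.
pose K := [set y : 'rV[R]_n | forall i, `[- rho, rho]%classic (y 0 i)].
have inK y : K y <-> forall i, `|y 0 i| <= rho.
  by split => Hy i; have := Hy i; rewrite /= in_itv /= ler_norml.
have Kc : compact K.
  exact: (@rV_compact _ n (fun=> `[- rho, rho]%classic) (fun=> @segment_compact R _ _)).
have K0 : K !=set0 by exists 0; apply/inK => i; rewrite mxE normr0.
have gc : {within K, continuous (fun y => fneg t y / fpos y)}.
  apply: continuous_subspaceT => y.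
  apply: (@continuousM _ _ (fneg t) (fun y => (fpos y)^-1)); first exact: continuous_expsum.
  by apply: continuousV; [rewrite gt_eqF ?fpos_gt0 | exact: continuous_expsum].
have [ys ysK ymax] := compact_EVT_max K0 Kc gc.
exists ys => [|y /inK yK]; first exact/inK/set_mem.
exact/ymax/mem_set.
Qed.

(* If the ratio [fneg tstar / fpos] stayed below 1 on a large box, the far field
   ([margin_far]) and a slight increase of [tstar] ([fneg_scale_le]) would give a
   dominated parameter beyond [tstar]. *)
Lemma tstar_attained : exists y, fneg tstar y = fpos y.
Proof.
have [e e0 reduce] := exists_margin_reduction.
have ts0 := tstar_gt0; have T0 : 0 < 2 * tstar by rewrite mulr_gt0.
have [rho rho0 far] := margin_far e0 T0.
have [ys _ ymax] := exists_box_ratio_max tstar (ltW rho0).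
exists ys; apply/eqP; rewrite eq_le dominated_tstar /=.
set M := fneg tstar ys / fpos ys in ymax.
have M0 : 0 <= M by rewrite divr_ge0 // ltW ?fneg_gt0 ?fpos_gt0.
rewrite -[X in X <= _]mul1r -ler_pdivlMr ?fpos_gt0 // -/M leNgt; apply/negP => M1.
have K1 : 1 <= 2 ^+ hmax :> R by rewrite exprn_ege1 // ler1n.
pose d := Num.min 1 ((1 - M) / 2 ^+ hmax).
have d0 : 0 < d by rewrite lt_min ltr01 /= divr_gt0 ?subr_gt0 //; lra.
have d1 : d <= 1 by rewrite ge_min lexx.
have dM : d * 2 ^+ hmax <= 1 - M.
  by rewrite -ler_pdivlMr ?ge_min ?lexx ?orbT //; lra.
suff : dominated ((1 + d) * tstar).
  by move/le_tstar; rewrite mulr_gt0 //; [nra | lra].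
apply: reduce => y my; have [inbox | /forallPn [i]] := boolP [forall i, `|y 0 i| <= rho].
  have := ymax y (fun i => forallP inbox i).
  rewrite ler_pdivrMr ?fpos_gt0 // => NM.
  apply: le_trans (fneg_scale_le y ts0 (ltW d0) d1) _.
  have s0 : 0 <= 1 + d * (2 ^+ hmax - 1) by nra.
  have sM : (1 + d * (2 ^+ hmax - 1)) * M <= 1 by nra.
  by rewrite (le_trans (ler_wpM2l s0 NM)) // mulrA ler_piMl // ltW // fpos_gt0.
rewrite -ltNge => /lt_le_trans /(_ (normr_coord_le y i)) rho_y.
by apply/ltW/(far _ _ _ _ my rho_y); rewrite ?mulr_gt0 //; nra.
Qed.

Lemma tstar_critical : exists2 x, positive_point x &
  critical_zero Ap Am (star_pow c tstar h) x.
Proof.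
have [ys eq_ys] := tstar_attained.
have fmin z : positive_point z -> signomial Ap Am (star_pow c tstar h) (expv ys) <=
    signomial Ap Am (star_pow c tstar h) z.
  move=> pz; rewrite -(lnvK pz) !signomial_expv eq_ys subrr subr_ge0.
  exact: dominated_tstar.
exists (expv ys); first exact: positive_point_expv.
split=> [|i]; first by rewrite signomial_expv eq_ys subrr.
by rewrite derive_signomial_min ?mulr0 //; exact: positive_point_expv.
Qed.

Lemma tstar_le_zero t x : 0 < t -> positive_point x ->
  signomial Ap Am (star_pow c t h) x = 0 -> tstar <= t.
Proof.
move=> t0 px; rewrite -(lnvK px) signomial_expv => /eqP; rewrite subr_eq0 => /eqP eq_x.
by rewrite leNgt; apply/negP => /(fneg_lt_fpos_below (lnv x) t0); rewrite eq_x ltxx.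
Qed.

Lemma copositive_iff_dominated1 : copositive Ap Am c <-> dominated 1.
Proof.
have c1 : star_pow c 1 h = c by apply/funext => a; rewrite /star_pow exp1rz mulr1.
split=> [cop y | dom x px].
  by have := cop _ (positive_point_expv y); rewrite -{1}c1 signomial_expv subr_ge0.
by rewrite -(lnvK px) -{1}c1 signomial_expv subr_ge0.
Qed.

End Threshold.

Theorem corollary2p8 (R : realType) (n : nat)
    (Ap Am : seq 'rV[int]_n) (c : 'rV[int]_n -> R) (h : 'rV[int]_n -> int) :
  uniq Ap -> uniq Am -> (forall a, a \in Ap -> a \notin Am) ->
  Am != [::] ->
  (forall b, b \in Am -> relint_conv Ap (realvec R b)) ->
  pos_coeffs Ap Am c ->
  lifts Ap Am h ->
  let S := [set t : R | 0 < t /\ exists x : 'rV[R]_n,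
              positive_point x /\ critical_zero Ap Am (star_pow c t h) x] in
  exists tstar : R,
    S tstar /\ (forall t, S t -> tstar <= t) /\
    (copositive Ap Am c <-> 1 <= tstar).
Proof.
move=> Ap_uniq _ _ Am_neq0 Am_relint c_pos h_lifts S.
exists (tstar Ap Am c h); split; [|split].
- split; first exact: tstar_gt0.
  have [x px crit] := tstar_critical Ap_uniq Am_neq0 Am_relint c_pos h_lifts.
  by exists x.
- move=> t [t0 [x [px [fx _]]]].
  exact: (tstar_le_zero Ap_uniq Am_neq0 Am_relint c_pos h_lifts t0 px fx).
- apply: iff_trans (copositive_iff_dominated1 c h_lifts) _.
  exact: (dominated_iff_le_tstar Ap_uniq Am_neq0 Am_relint c_pos h_lifts ltr01).
Qed.
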